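(* Assume $A$ is passive, i.e. $\operatorname{Re}(x^*Ax)<0$ for all nonzero $x\in\mathbb C^n$, that $F\succeq0$, and that $V_k$ has full column rank. Let $X_k=V_kT_k^{-1}V_k^*$ and $R_k=C^*C+A^*X_k+X_kA-X_kFX_k$. Define $$K_k:=(V_k^*V_k)^{-1}V_k^*A^*V_k,\qquad g_k:=(V_k^*V_k)^{-1}V_k^*C^*.$$ Then: (i) $V_k^*R_kV_k=0$ if and only if $g_k=T_k^{-1}\mathbf 1$. (ii) $V_k^*R_kV_k=0$ if and only if $\Lambda_k^*T_k+T_kK_k-V_k^*FV_k=0$. (iii) If $V_k^*R_kV_k=0$, then, after a suitable ordering, $\alpha_j=-\bar\lambda_j$ for $j=1,\dots,k$, where $\lambda_1,\dots,\lambda_k$ are the eigenvalues (with multiplicity) of $$(V_k^*V_k)^{-1}V_k^*\big(A^*-V_kT_k^{-1}V_k^*F\big)V_k .$$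
   Context: Let $A\in\mathbb C^{n\times n}$, let $C\in\mathbb C^{1\times n}$, and let $F\in\mathbb C^{n\times n}$ be Hermitian; $M^*$ denotes the conjugate transpose and $\succeq0$ denotes Hermitian positive semidefinite. Let $\alpha_1,\dots,\alpha_k\in\mathbb C$ be pairwise distinct with $\operatorname{Re}(\alpha_j)>0$ and $-A^*+\alpha_jI$ nonsingular. Set $$V_k=\big[(-A^*+\alpha_1I)^{-1}C^*,\dots,(-A^*+\alpha_kI)^{-1}C^*\big]\in\mathbb C^{n\times k},$$ $\Lambda_k=\operatorname{diag}(\alpha_1,\dots,\alpha_k)$, $\mathbf 1=[1,\dots,1]^T\in\mathbb R^k$, and let $T_k\in\mathbb C^{k\times k}$ be the matrix with entries $T_k(i,j)=\dfrac{1+(V_k^*FV_k)_{ij}}{\bar\alpha_i+\alpha_j}$, i.e. the unique solution of $\Lambda_k^*T+T\Lambda_k=V_k^*FV_k+\mathbf 1\mathbf 1^*$. Under these assumptions $T_k$ is Hermitian positive definite. *)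

(* Complex numbers are modelled by an arbitrary
   numClosedFieldType C (algebraically closed field with conjugation and
   partial order, e.g. algC). *)
From HB Require Import structures.
From mathcomp Require Import all_boot all_order all_algebra.
Set Implicit Arguments. Unset Strict Implicit. Unset Printing Implicit Defensive.
Import Order.TTheory GRing.Theory Num.Theory.
Local Open Scope ring_scope.

Definition ctr (C : numClosedFieldType) (m n : nat) (M : 'M[C]_(m, n)) : 'M[C]_(n, m) :=
  (map_mx Num.conj M)^T.

Definition Vk (C : numClosedFieldType) (n k : nat) (A : 'M[C]_n) (Cm : 'rV[C]_n)
  (alpha : 'I_k -> C) : 'M[C]_(n, k) :=
  \matrix_(i < n, j < k) ((invmx (- ctr A + (alpha j)%:M) *m ctr Cm) i ord0).

Definition Tk (C : numClosedFieldType) (n k : nat) (F : 'M[C]_n) (V : 'M[C]_(n, k))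
  (alpha : 'I_k -> C) : 'M[C]_k :=
  \matrix_(i < k, j < k) ((1 + (ctr V *m F *m V) i j) / ((alpha i)^* + alpha j)).

Definition Lamk (C : numClosedFieldType) (k : nat) (alpha : 'I_k -> C) : 'M[C]_k :=
  diag_mx (\row_j alpha j).

From HB Require Import structures.
From mathcomp Require Import all_boot all_order all_algebra.
From mathcomp Require Import ring.
Import Order.TTheory GRing.Theory Num.Theory.
Local Open Scope ring_scope.

(* Write V = V_k, T = T_k, Λ = Λ_k, M = V^*V (Gram matrix), h = V^*C^*,
   G = V^*FV, g = M^{-1}h and 1 for the all-ones column.  Two identities
   drive the whole proof:
   - the shift identity A^*V = VΛ - C^*1^*, because the j-th column of V
     solves (-A^* + α_j I) v = C^*;
   - the Lyapunov identity Λ^*T + TΛ = G + 11^*, which is the entrywise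
     definition of T.
   Substituting them into V^*RV gives the factorization
       T M^{-1} (V^*RV) M^{-1} T = (Tg - 1)(Tg - 1)^*,
   so V^*RV = 0 iff Tg = 1, which is (i).  Moreover K = Λ - g1^*, hence
   Λ^*T + TK - G = (1 - Tg)1^*, which is (ii).  When Tg = 1 the projected
   closed-loop matrix is similar, via T, to the diagonal matrix -Λ^* ,
   so its eigenvalues are the -ᾱ_j, which is (iii).
   Invertibility of T follows from F ⪰ 0 and the distinctness of the shifts
   by a Krylov/Vandermonde argument, that of M from the full column rank
   of V. *)

Lemma ctrE {C : numClosedFieldType} {m n : nat} (A : 'M[C]_(m, n)) i j :
  ctr A i j = (A j i)^*.
Proof. by rewrite !mxE. Qed.

Lemma ctrK {C : numClosedFieldType} {m n : nat} (A : 'M[C]_(m, n)) : ctr (ctr A) = A.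
Proof. by apply/matrixP => i j; rewrite !ctrE conjCK. Qed.

Lemma ctr_mul {C : numClosedFieldType} {m n p : nat}
  (A : 'M[C]_(m, n)) (B : 'M[C]_(n, p)) :
  ctr (A *m B) = ctr B *m ctr A.
Proof. by rewrite /ctr map_mxM trmx_mul. Qed.

Lemma ctr_inv {C : numClosedFieldType} {n : nat} (A : 'M[C]_n) :
  ctr (invmx A) = invmx (ctr A).
Proof. by rewrite /ctr map_invmx trmx_inv. Qed.

Lemma ctrB {C : numClosedFieldType} {m n : nat} (A B : 'M[C]_(m, n)) :
  ctr (A - B) = ctr A - ctr B.
Proof. by apply/matrixP => i j; rewrite !mxE rmorphB. Qed.

Lemma ctr0 {C : numClosedFieldType} {m n : nat} : ctr (0 : 'M[C]_(m, n)) = 0.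
Proof. by apply/matrixP => i j; rewrite !mxE rmorph0. Qed.

Lemma ctrZ {C : numClosedFieldType} {m n : nat} (a : C) (A : 'M[C]_(m, n)) :
  ctr (a *: A) = a^* *: ctr A.
Proof. by apply/matrixP => i j; rewrite !mxE rmorphM. Qed.

Lemma ctr_diag {C : numClosedFieldType} {k : nat} (d : 'rV[C]_k) :
  ctr (diag_mx d) = diag_mx (map_mx Num.conj d).
Proof.
apply/matrixP => i j; rewrite !mxE eq_sym.
by case: eqP => [->|_]; rewrite ?mulr1n ?mulr0n ?rmorph0.
Qed.

Lemma cnorm2_ge0 {C : numClosedFieldType} {m : nat} (z : 'cV[C]_m) :
  0 <= (ctr z *m z) ord0 ord0.
Proof.
by rewrite mxE; apply: sumr_ge0 => l _; rewrite ctrE mulrC mul_conjC_ge0.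
Qed.

Lemma cnorm2_eq0 {C : numClosedFieldType} {m : nat} (z : 'cV[C]_m) :
  (ctr z *m z) ord0 ord0 = 0 -> z = 0.
Proof.
rewrite mxE => z0; apply/matrixP => i j; rewrite (ord1 j) mxE.
have terms_ge0 (l : 'I_m) : true -> 0 <= ctr z ord0 l * z l ord0.
  by move=> _; rewrite ctrE mulrC mul_conjC_ge0.
have := psumr_eq0P terms_ge0 z0 (i := i) isT.
by rewrite ctrE mulrC => /eqP; rewrite mul_conjC_eq0 => /eqP.
Qed.

Lemma outer_eq0 {C : numClosedFieldType} {m : nat} (w : 'cV[C]_m) :
  w *m ctr w = 0 -> w = 0.
Proof.
move=> ww0; apply/matrixP => i j; rewrite (ord1 j).
have := congr1 (fun M : 'M[C]_m => M i i) ww0; rewrite !mxE big_ord1 ctrE.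
by move=> /eqP; rewrite mul_conjC_eq0 => /eqP ->.
Qed.

Lemma mx11E {R : pzRingType} (A : 'M[R]_1) : A = (A ord0 ord0)%:M.
Proof. exact: mx11_scalar. Qed.

(* A positive semidefinite Hermitian F is "definite on its kernel":
   y^*Fy = 0 forces Fy = 0 (test the form on (q+1) y - s Fy, with
   s = |Fy|^2 and q = (Fy)^*F(Fy)). *)
Lemma psd_ker {C : numClosedFieldType} {n : nat} {F : 'M[C]_n} (hF : ctr F = F)
  (hpsd : forall x : 'cV[C]_n, 0 <= (ctr x *m F *m x) ord0 ord0)
  (y : 'cV[C]_n) : (ctr y *m F *m y) ord0 ord0 = 0 -> F *m y = 0.
Proof.
move=> hy; set z := F *m y.
set s := (ctr z *m z) ord0 ord0; set q := (ctr z *m F *m z) ord0 ord0.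
have s0 : 0 <= s by apply: cnorm2_ge0.
have q0 : 0 <= q by apply: hpsd.
have yFy : ctr y *m F *m y = 0 by rewrite [LHS]mx11E hy raddf0.
have yFz : ctr y *m F *m z = s%:M by rewrite [LHS]mx11E /s /z ctr_mul hF.
have zFy : ctr z *m F *m y = s%:M by rewrite [LHS]mx11E /s /z ctr_mul hF -!mulmxA.
have zFz : ctr z *m F *m z = q%:M by rewrite [LHS]mx11E.
have := hpsd ((q + 1) *: y - s *: z).
rewrite ctrB !ctrZ (geC0_conj s0) geC0_conj ?addr_ge0 ?ler01 //.
rewrite !mulmxBl !mulmxBr -!scalemxAl -!scalemxAr -/z yFy yFz zFy zFz.
rewrite !(scaler0, scale_scalar_mx, sub0r) -!(raddfN, raddfB) /= mxE eqxx mulr1n.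
have -> : - ((q + 1) * (s * s)) - (s * ((q + 1) * s) - s * (s * q))
    = - ((s * s) * (q + 2%:R)) by ring.
rewrite oppr_ge0 => hle.
have : (s * s) * (q + 2%:R) == 0.
  by rewrite eq_le hle !mulr_ge0 ?addr_ge0 ?ler0n.
rewrite !mulf_eq0 orbb => /orP [/eqP /cnorm2_eq0 //|/eqP q2].
by have := ltr_wpDl q0 (ltr0n C 2); rewrite q2 ltxx.
Qed.

Lemma unit_of_ker {C : fieldType} {m : nat} (A : 'M[C]_m) :
  (forall x : 'cV[C]_m, A *m x = 0 -> x = 0) -> A \in unitmx.
Proof.
move=> ker0; rewrite -unitmx_tr unitmxE unitfE; apply/det0P => -[v vn0 vA].
have : A *m v^T = 0 by rewrite -[A]trmxK -trmx_mul vA trmx0.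
by move/ker0 => /(congr1 trmx); rewrite trmxK trmx0 => v0; rewrite v0 eqxx in vn0.
Qed.

Lemma gram_unit {C : numClosedFieldType} {n k : nat} {V : 'M[C]_(n, k)} :
  \rank V = k -> ctr V *m V \in unitmx.
Proof.
move=> rankV; apply: unit_of_ker => y VVy.
have : (ctr (V *m y) *m (V *m y)) ord0 ord0 = 0.
  by rewrite ctr_mul -mulmxA (mulmxA (ctr V)) VVy mulmx0 mxE.
move/cnorm2_eq0 => Vy.
have /row_fullP [B hB] : row_full V by rewrite /row_full rankV.
by rewrite -[y]mul1mx -hB -mulmxA Vy mulmx0.
Qed.

(* Vandermonde: if all power moments sum_l a_l^m x_l vanish and the nodes
   a_l are distinct, then x = 0 (evaluate against Lagrange-type products). *)
Lemma vandermonde_ker {C : fieldType} {k : nat} {a : 'I_k -> C} (inj_a : injective a)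
  (x : 'I_k -> C) : (forall m, \sum_l a l ^+ m * x l = 0) -> forall l, x l = 0.
Proof.
move=> moments0.
have poly_moment0 (p : {poly C}) : \sum_l p.[a l] * x l = 0.
  under eq_bigr => l _ do rewrite horner_coef mulr_suml.
  rewrite exchange_big /=; apply: big1 => i _.
  under eq_bigr => l _ do rewrite -mulrA.
  by rewrite -mulr_sumr moments0 mulr0.
move=> j; pose p := \prod_(l | l != j) ('X - (a l)%:P).
have pj_neq0 : p.[a j] != 0.
  rewrite horner_prod; apply/prodf_neq0 => l lj.
  by rewrite hornerXsubC subr_eq0; apply: contraNneq lj => /inj_a ->.
have := poly_moment0 p; rewrite (bigD1 j) //= big1 ?addr0.
  by move/eqP; rewrite mulf_eq0 (negPf pj_neq0) => /eqP.
move=> l lj; rewrite horner_prod (bigD1 l) //= hornerXsubC subrr !mul0r.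
by [].
Qed.

Lemma char_poly_sim {C : comUnitRingType} {k : nat} (P B : 'M[C]_k) :
  P \in unitmx -> char_poly (invmx P *m B *m P) = char_poly B.
Proof.
move=> Pu; rewrite /char_poly /char_poly_mx.
set Q := map_mx (@polyC C) P; set Qi := map_mx (@polyC C) (invmx P).
have QiQ : Qi *m Q = 1%:M by rewrite -map_mxM mulVmx // map_mx1.
have -> : 'X%:M - map_mx (@polyC C) (invmx P *m B *m P)
   = Qi *m ('X%:M - map_mx (@polyC C) B) *m Q.
  by rewrite !map_mxM mulmxBr mulmxBl mul_mx_scalar -scalemxAl QiQ scalemx1.
by rewrite !det_mulmx [\det Qi * _]mulrC -mulrA -det_mulmx QiQ det1 mulr1.
Qed.

Lemma residual_factorization {C : numClosedFieldType} {k : nat} (T M L : 'M[C]_k)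
  (h u : 'cV[C]_k) :
  T \in unitmx -> M \in unitmx -> ctr T = T -> ctr M = M ->
  let P := M *m L - h *m ctr u in
  let G := ctr L *m T + T *m L - u *m ctr u in
  T *m invmx M *m (h *m ctr h + P *m invmx T *m M + M *m invmx T *m ctr P
                   - M *m invmx T *m G *m invmx T *m M) *m invmx M *m T
  = (T *m (invmx M *m h) - u) *m ctr (T *m (invmx M *m h) - u).
Proof.
move=> Tu Mu hT hM P G.
have regroup (a b c d e f : 'M[C]_k) :
    a + (b - c) + (d - e) - (d + b - f) = a - c + (- e - - f).
  rewrite !opprD !opprK !addrA [a + b - c + d - e - d]addrAC addrK.
  by rewrite [a + b - c - e - b]addrAC [a + b - c - b]addrAC addrK [a - c - e]addrAC.
rewrite /P /G !ctrB !ctr_mul ctr_inv ctrK hT hM.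
rewrite !(mulmxDr, mulmxDl, mulmxN, mulNmx, mulmxA).
rewrite !(mulmxK Mu, mulmxKV Mu, mulmxK Tu, mulmxKV Tu, mulmxV Tu, mulmxV Mu, mul1mx).
exact: regroup.
Qed.

Lemma congr_outer_eq0 {C : numClosedFieldType} {k : nat}
  (S E : 'M[C]_k) (w : 'cV[C]_k) :
  S \in unitmx -> S *m E *m ctr S = w *m ctr w -> E = 0 <-> w = 0.
Proof.
move=> Su SES; split=> [E0|w0].
  by apply: outer_eq0; rewrite -SES E0 mulmx0 mul0mx.
have S'u : ctr S \in unitmx by rewrite unitmx_tr map_unitmx.
have -> : E = invmx S *m (w *m ctr w) *m invmx (ctr S).
  by rewrite -SES !mulmxA (mulVmx Su) mul1mx -mulmxA (mulmxV S'u) mulmx1.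
by rewrite w0 mul0mx mulmx0 mul0mx.
Qed.

(* Kernel of a Hermitian solution of a Lyapunov equation: if
   L^*T + TL = G + uu^* with G ⪰ 0 and Tx = 0, then u^*x = 0 and the
   kernel of T is L-invariant, so u^* annihilates the whole Krylov space
   of L generated by x. *)
Lemma lyapunov_kernel {C : numClosedFieldType} {k : nat}
  {T L G : 'M[C]_k} {u : 'cV[C]_k} :
  ctr T = T -> ctr G = G -> (forall y : 'cV[C]_k, 0 <= (ctr y *m G *m y) ord0 ord0) ->
  ctr L *m T + T *m L = G + u *m ctr u ->
  forall x : 'cV[C]_k, T *m x = 0 -> forall m, ctr u *m iter m (mulmx L) x = 0.
Proof.
move=> hT hG Gpsd lyap.
have step (y : 'cV[C]_k) : T *m y = 0 -> ctr u *m y = 0 /\ T *m (L *m y) = 0.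
  move=> Ty; have yT : ctr y *m T = 0 by rewrite -hT -ctr_mul Ty ctr0.
  have lhs0 : ctr y *m (ctr L *m T + T *m L) *m y = 0.
    by rewrite mulmxDr mulmxDl !mulmxA yT -(mulmxA _ T y) Ty mulmx0 !mul0mx addr0.
  have := congr1 (fun N => (ctr y *m N *m y) ord0 ord0) lyap.
  rewrite /= lhs0 mulmxDr mulmxDl !mulmxA -(mulmxA _ (ctr u)) -[ctr y *m u]ctrK.
  rewrite ctr_mul ctrK [in RHS]mxE mxE => /esym yGy_uy.
  have yGy0 := Gpsd y; have uy0 := cnorm2_ge0 (ctr u *m y).
  have yGy : (ctr y *m G *m y) ord0 ord0 = 0.
    by apply/eqP; rewrite eq_le yGy0 andbT -yGy_uy lerDl.
  have uy : ctr u *m y = 0.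
    by apply: cnorm2_eq0; apply/eqP; rewrite eq_le uy0 andbT -yGy_uy lerDr.
  split=> //; have := congr1 (mulmx^~ y) lyap.
  by rewrite !mulmxDl -!mulmxA Ty (psd_ker hG Gpsd _ yGy) uy !mulmx0 !add0r.
move=> x Tx m; have T_krylov : T *m iter m (mulmx L) x = 0.
  by elim: m => [|m /step[_ TLy]] //=.
by case: (step _ T_krylov).
Qed.

Lemma congr_herm {C : numClosedFieldType} {n k : nat} (F : 'M[C]_n) (V : 'M[C]_(n, k)) :
  ctr F = F -> ctr (ctr V *m F *m V) = ctr V *m F *m V.
Proof. by move=> hF; rewrite !ctr_mul ctrK hF mulmxA. Qed.

Lemma congr_psd {C : numClosedFieldType} {n k : nat} (F : 'M[C]_n) (V : 'M[C]_(n, k)) :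
  (forall x : 'cV[C]_n, 0 <= (ctr x *m F *m x) ord0 ord0) ->
  forall y : 'cV[C]_k, 0 <= (ctr y *m (ctr V *m F *m V) *m y) ord0 ord0.
Proof. by move=> Fpsd y; rewrite !mulmxA -ctr_mul -mulmxA; apply: Fpsd. Qed.

Lemma shift_sum_neq0 {C : numClosedFieldType} {k : nat} {alpha : 'I_k -> C} :
  (forall j, 0 < 'Re (alpha j)) -> forall i j, (alpha i)^* + alpha j != 0.
Proof.
move=> re_gt0 i j; apply/eqP => /(congr1 (fun x => 'Re x)).
rewrite raddfD /= Re_conj raddf0 => re_sum0.
by have := addr_gt0 (re_gt0 i) (re_gt0 j); rewrite re_sum0 ltxx.
Qed.

Lemma Tk_lyapunov {C : numClosedFieldType} {n k : nat} (F : 'M[C]_n)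
  (V : 'M[C]_(n, k)) (alpha : 'I_k -> C) : (forall j, 0 < 'Re (alpha j)) ->
  ctr (Lamk alpha) *m Tk F V alpha + Tk F V alpha *m Lamk alpha
  = ctr V *m F *m V + (const_mx 1 : 'cV[C]_k) *m ctr (const_mx 1).
Proof.
move=> re_gt0; apply/matrixP => i j.
rewrite ctr_diag /Lamk mul_diag_mx mul_mx_diag !mxE big_ord1 !mxE conjC1 mulr1.
have := shift_sum_neq0 re_gt0 i j; set G := (ctr V *m F *m V) i j.
by move=> den_neq0; field.
Qed.

Lemma Tk_herm {C : numClosedFieldType} {n k : nat} (F : 'M[C]_n)
  (V : 'M[C]_(n, k)) (alpha : 'I_k -> C) :
  ctr F = F -> ctr (Tk F V alpha) = Tk F V alpha.
Proof.
move=> hF; apply/matrixP => i j.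
rewrite ctrE [Tk _ _ _ i j]mxE [Tk _ _ _ j i]mxE fmorph_div !rmorphD rmorph1 /=.
by rewrite conjCK -ctrE congr_herm // [alpha j + _]addrC.
Qed.

Lemma Tk_unit {C : numClosedFieldType} {n k : nat} (F : 'M[C]_n)
  (V : 'M[C]_(n, k)) (alpha : 'I_k -> C) :
  ctr F = F -> injective alpha -> (forall j, 0 < 'Re (alpha j)) ->
  (forall x : 'cV[C]_n, 0 <= (ctr x *m F *m x) ord0 ord0) ->
  Tk F V alpha \in unitmx.
Proof.
move=> hF inj_alpha re_gt0 Fpsd; apply: unit_of_ker => x Tx.
have := lyapunov_kernel (Tk_herm F V alpha hF) (congr_herm F V hF) (congr_psd F V Fpsd)
                        (Tk_lyapunov F V alpha re_gt0) x Tx.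
have krylovE m l : iter m (mulmx (Lamk alpha)) x l ord0 = alpha l ^+ m * x l ord0.
  elim: m => [|m IH]; first by rewrite expr0 mul1r.
  by rewrite /= /Lamk mul_diag_mx mxE IH !mxE exprS mulrA.
move=> moments0; apply/matrixP => l j; rewrite (ord1 j) mxE.
apply: (vandermonde_ker inj_alpha (fun l => x l ord0)) => m.
transitivity ((ctr (const_mx 1 : 'cV[C]_k) *m iter m (mulmx (Lamk alpha)) x) ord0 ord0).
  by rewrite mxE; apply: eq_bigr => i _; rewrite ctrE mxE conjC1 mul1r krylovE.
by rewrite moments0 mxE.
Qed.

Lemma projected_residual {C : numClosedFieldType} {n k : nat} (A F : 'M[C]_n)
  (Cm : 'rV[C]_n) (V : 'M[C]_(n, k)) (Ti : 'M[C]_k) :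
  let X := V *m Ti *m ctr V in
  ctr V *m (ctr Cm *m Cm + ctr A *m X + X *m A - X *m F *m X) *m V
  = (ctr V *m ctr Cm) *m ctr (ctr V *m ctr Cm)
    + (ctr V *m ctr A *m V) *m Ti *m (ctr V *m V)
    + (ctr V *m V) *m Ti *m ctr (ctr V *m ctr A *m V)
    - (ctr V *m V) *m Ti *m (ctr V *m F *m V) *m Ti *m (ctr V *m V).
Proof. by rewrite /= !ctr_mul !ctrK !(mulmxDr, mulmxDl, mulmxN, mulNmx, mulmxA). Qed.

Lemma mul_ones_eq0 {C : numClosedFieldType} {k : nat} (w : 'cV[C]_k) :
  w *m ctr (const_mx 1 : 'cV[C]_k) = 0 -> w = 0.
Proof.
move=> w1; apply/matrixP => i j; rewrite (ord1 j).
have := congr1 (fun N : 'M[C]_k => N i i) w1.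
by rewrite /= !mxE big_ord1 ctrE mxE conjC1 mulr1.
Qed.

Section ProjectedRiccatiResidual.

Variables (C : numClosedFieldType) (n k : nat).
Variables (A : 'M[C]_n) (Cm : 'rV[C]_n) (F : 'M[C]_n) (alpha : 'I_k -> C).
Hypothesis hF : ctr F = F.
Hypothesis inj_alpha : injective alpha.
Hypothesis re_alpha : forall j, 0 < 'Re (alpha j).
Hypothesis shift_unit : forall j, (- ctr A + (alpha j)%:M) \in unitmx.
Hypothesis F_psd : forall x : 'cV[C]_n, 0 <= (ctr x *m F *m x) ord0 ord0.
Hypothesis rank_V : \rank (Vk A Cm alpha) = k.

Local Notation V := (Vk A Cm alpha).
Local Notation T := (Tk F V alpha).
Local Notation Lam := (Lamk alpha).
Local Notation one := (const_mx 1 : 'cV[C]_k).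
Local Notation M := (ctr V *m V).
Local Notation h := (ctr V *m ctr Cm).
Local Notation G := (ctr V *m F *m V).
Local Notation g := (invmx M *m ctr V *m ctr Cm).
Local Notation K := (invmx M *m ctr V *m ctr A *m V).
Local Notation X := (V *m invmx T *m ctr V).
Local Notation R := (ctr Cm *m Cm + ctr A *m X + X *m A - X *m F *m X).

(* The shift identity A^*V = VΛ - C^*1^*: column j of V solves
   (-A^* + α_j I) v = C^*. *)
Lemma shift_identity : ctr A *m V = V *m Lam - ctr Cm *m ctr one.
Proof.
apply/matrixP => i j.
set v := invmx (- ctr A + (alpha j)%:M) *m ctr Cm.
have shifted_solve : (- ctr A + (alpha j)%:M) *m v = ctr Cm.
  by rewrite /v mulmxA mulmxV ?mul1mx.
have Av : ctr A *m v = alpha j *: v - ctr Cm.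
  by rewrite -shifted_solve mulmxDl mulNmx mul_scalar_mx opprD opprK addrC subrK.
have -> : (ctr A *m V) i j = (ctr A *m v) i ord0.
  by rewrite !mxE; apply: eq_bigr => l _; rewrite !mxE.
rewrite Av /Lamk mul_mx_diag !mxE big_ord1 ctrE !mxE conjC1 mulr1 mulrC.
by [].
Qed.

Lemma projected_shift : ctr V *m ctr A *m V = M *m Lam - h *m ctr one.
Proof. by rewrite -mulmxA shift_identity mulmxBr !mulmxA. Qed.

Lemma G_lyapunov : G = ctr Lam *m T + T *m Lam - one *m ctr one.
Proof. by rewrite Tk_lyapunov // addrK. Qed.

Let M_unit : M \in unitmx := gram_unit rank_V.
Let T_unit : T \in unitmx := Tk_unit F V alpha hF inj_alpha re_alpha F_psd.

Lemma projected_residual_eq0 : ctr V *m R *m V = 0 <-> T *m g = one.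
Proof.
have hT : ctr T = T := Tk_herm F V alpha hF.
have hM : ctr M = M by rewrite ctr_mul ctrK.
have factor : T *m invmx M *m (ctr V *m R *m V) *m ctr (T *m invmx M)
              = (T *m g - one) *m ctr (T *m g - one).
  move: (residual_factorization T M Lam h one T_unit M_unit hT hM) => /= fact.
  rewrite [ctr (T *m _)]ctr_mul ctr_inv hM hT.
  rewrite projected_residual projected_shift G_lyapunov.
  by rewrite !mulmxA in fact *.
rewrite (congr_outer_eq0 _ _ _ _ factor); last first.
  by rewrite unitmx_mul T_unit unitmx_inv M_unit.
by split=> [/subr0_eq |->]; last rewrite subrr.
Qed.

Lemma K_eq : K = Lam - g *m ctr one.
Proof.
rewrite -!mulmxA [ctr V *m (ctr A *m V)]mulmxA projected_shift mulmxBr.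
by rewrite (mulKmx M_unit) !mulmxA.
Qed.

Lemma sylvester_defect : ctr Lam *m T + T *m K - G = (one - T *m g) *m ctr one.
Proof.
have regroup (a b c d : 'M[C]_k) : a + (b - c) - (a + b - d) = d - c.
  rewrite !opprD opprK !addrA [a + b - c - a]addrAC [a + b - a]addrAC subrr add0r.
  by rewrite [b - c - b]addrAC subrr add0r addrC.
by rewrite K_eq mulmxBr G_lyapunov mulmxBl !mulmxA regroup.
Qed.

Lemma closed_loop_expand :
  invmx M *m ctr V *m (ctr A - X *m F) *m V = K - invmx T *m G.
Proof.
rewrite mulmxBr mulmxBl !mulmxA -[invmx M *m ctr V *m V]mulmxA (mulVmx M_unit).
by rewrite mul1mx.
Qed.

Lemma closed_loop_similar :
  T *m g = one ->
  invmx M *m ctr V *m (ctr A - X *m F) *m V = invmx T *m (- ctr Lam) *m T.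
Proof.
move=> Tg; have TN : T *m (K - invmx T *m G) = - ctr Lam *m T.
  rewrite mulmxBr mulKVmx // mulNmx.
  by have := sylvester_defect; rewrite Tg subrr mul0mx -addrA => /addr0_eq.
by rewrite closed_loop_expand -[RHS]mulmxA -TN mulKmx.
Qed.

End ProjectedRiccatiResidual.

Arguments projected_residual_eq0 {C n k A Cm F alpha}.
Arguments sylvester_defect {C n k A Cm F alpha}.
Arguments closed_loop_similar {C n k A Cm F alpha}.

Theorem theorem6p4 (C : numClosedFieldType) (n k : nat)
  (A : 'M[C]_n) (Cm : 'rV[C]_n) (F : 'M[C]_n) (alpha : 'I_k -> C)
  (hF_herm : ctr F = F)
  (h_alpha_inj : injective alpha)
  (h_alpha_re : forall j, 0 < 'Re (alpha j))
  (h_alpha_ns : forall j, (- ctr A + (alpha j)%:M) \in unitmx)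
  (h_passive : forall x : 'cV[C]_n, x != 0 -> 'Re ((ctr x *m A *m x) ord0 ord0) < 0)
  (h_Fpsd : forall x : 'cV[C]_n, 0 <= (ctr x *m F *m x) ord0 ord0)
  (h_rank : \rank (Vk A Cm alpha) = k) :
  let V := Vk A Cm alpha in
  let T := Tk F V alpha in
  let Lam := Lamk alpha in
  let X := V *m invmx T *m ctr V in
  let R := ctr Cm *m Cm + ctr A *m X + X *m A - X *m F *m X in
  let K := invmx (ctr V *m V) *m ctr V *m ctr A *m V in
  let g := invmx (ctr V *m V) *m ctr V *m ctr Cm in
  let one := (const_mx 1 : 'cV[C]_k) in
  ((ctr V *m R *m V = 0) <-> (g = invmx T *m one)) /\
  ((ctr V *m R *m V = 0) <-> (ctr Lam *m T + T *m K - ctr V *m F *m V = 0)) /\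
  (ctr V *m R *m V = 0 ->
     exists lambda : 'I_k -> C,
       char_poly (invmx (ctr V *m V) *m ctr V *m (ctr A - V *m invmx T *m ctr V *m F) *m V)
         = \prod_(j < k) ('X - (lambda j)%:P) /\
       forall j, alpha j = - (lambda j)^*).
Proof.
move=> V T Lam X R K g one; rewrite /one /g /K /R /X /Lam /T /V.
have Tu := Tk_unit F (Vk A Cm alpha) alpha hF_herm h_alpha_inj h_alpha_re h_Fpsd.
have res0 :=
  projected_residual_eq0 hF_herm h_alpha_inj h_alpha_re h_alpha_ns h_Fpsd h_rank.
have similar :=
  closed_loop_similar hF_herm h_alpha_inj h_alpha_re h_alpha_ns h_Fpsd h_rank.
split; [|split].
- rewrite res0; split=> [<-|->]; by rewrite ?(mulKmx Tu) ?(mulKVmx Tu).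
- rewrite res0 (sylvester_defect h_alpha_re h_alpha_ns h_rank).
  by split=> [->|/mul_ones_eq0/subr0_eq/esym //]; rewrite subrr mul0mx.
- move=> /res0/similar ->; exists (fun j => - (alpha j)^*).
  split; last by move=> j; rewrite rmorphN /= conjCK opprK.
  rewrite char_poly_sim // ctr_diag -linearN char_poly_trig ?diag_mx_is_trig //.
  by apply: eq_bigr => j _; rewrite !mxE eqxx mulr1n.
Qed.
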